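(* Let $H$ be a separable infinite-dimensional complex Hilbert space and let $X$ be a closed subspace of $H$ whose dimension and codimension are both infinite. Then there is a closed subspace $Q$ of $H$ of infinite dimension and infinite codimension such that $Q\cap X^{\perp}=0$ and $Q^{\perp}\cap X^{\perp}=0$. *)

From HB Require Import structures.
From mathcomp Require Import all_boot all_order all_algebra.
From mathcomp Require Import complex.
From mathcomp Require Import reals.
Set Implicit Arguments. Unset Strict Implicit. Unset Printing Implicit Defensive.
Import Order.TTheory GRing.Theory Num.Theory.
Local Open Scope ring_scope.

Section Hilbert.
Variables (R : realType) (H : lmodType R[i]) (ip : H -> H -> R[i]).

Definition is_inner_product : Prop :=
  [/\ (forall (a : R[i]) (x y z : H), ip (a *: x + y) z = a * ip x z + ip y z),
      (forall x y : H, ip y x = (ip x y)^*),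
      (forall x : H, 0 <= ip x x) &
      (forall x : H, ip x x = 0 -> x = 0)].

Definition nrm2 (x : H) : R[i] := ip x x.

Definition cauchy_seq (u : nat -> H) : Prop :=
  forall e : R[i], 0 < e -> exists N : nat, forall m n : nat,
    (N <= m)%N -> (N <= n)%N -> nrm2 (u m - u n) < e.

Definition converges_to (u : nat -> H) (l : H) : Prop :=
  forall e : R[i], 0 < e -> exists N : nat, forall n : nat,
    (N <= n)%N -> nrm2 (u n - l) < e.

Definition complete_ip : Prop :=
  forall u : nat -> H, cauchy_seq u -> exists l : H, converges_to u l.

Definition separable_ip : Prop :=
  exists d : nat -> H, forall (x : H) (e : R[i]), 0 < e ->
    exists n : nat, nrm2 (x - d n) < e.

Definition is_hilbert_space : Prop :=
  [/\ is_inner_product, complete_ip & separable_ip].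

Definition lin_indep (n : nat) (v : 'I_n -> H) : Prop :=
  forall c : 'I_n -> R[i], \sum_(i < n) c i *: v i = 0 -> forall i, c i = 0.

Definition lin_indep_mod (X : H -> Prop) (n : nat) (v : 'I_n -> H) : Prop :=
  forall c : 'I_n -> R[i], X (\sum_(i < n) c i *: v i) -> forall i, c i = 0.

Definition is_subspace (X : H -> Prop) : Prop :=
  [/\ X 0, (forall x y, X x -> X y -> X (x + y)) &
      (forall (a : R[i]) x, X x -> X (a *: x))].

Definition is_closed (X : H -> Prop) : Prop :=
  forall (u : nat -> H) (l : H), (forall n, X (u n)) -> converges_to u l -> X l.

Definition closed_subspace (X : H -> Prop) : Prop := is_subspace X /\ is_closed X.

Definition infinite_dim (X : H -> Prop) : Prop :=
  forall n : nat, exists v : 'I_n -> H, (forall i, X (v i)) /\ lin_indep v.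

(* codim X = dim (H / X) = infinity *)
Definition infinite_codim (X : H -> Prop) : Prop :=
  forall n : nat, exists v : 'I_n -> H, lin_indep_mod X v.

Definition perp (X : H -> Prop) : H -> Prop :=
  fun y => forall x, X x -> ip x y = 0.

End Hilbert.

From HB Require Import structures.
From mathcomp Require Import all_boot all_order all_algebra.
From mathcomp Require Import complex.
From mathcomp Require Import boolp classical_sets reals.
From mathcomp Require Import ring lra.
Import Order.TTheory GRing.Theory Num.Theory.
Local Open Scope complex_scope.
Local Open Scope ring_scope.

Set Implicit Arguments. Unset Strict Implicit. Unset Printing Implicit Defensive.

(* Pick an orthonormal sequence [g] in [X], a dense sequence [d], and vectors
   [f n] orthogonal to [X] with [|f n|^2 <= 2^-n] and [d n \in X + C f n]
   (rescaled residues of the orthogonal projections of the [d n] onto [X]).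
   Then [Q := {g (2n) + f n}^perp] works:
   - [Q] contains the orthonormal vectors [g (2n+1)];
   - the [g (2n) + f n] are biorthogonal to the [g (2n)], so independent modulo [Q];
   - if [y \in Q] is orthogonal to [X], then [y] is orthogonal to every [f n],
     hence to every [d n], so [y = 0];
   - if [y] is orthogonal to [Q] and to [X], then [|<f n, y>|^2 <= 2^-n |y|^2],
     so some [z \in X] has [<g (2n), z> = - <f n, y>] for all [n];
     then [y + z \in Q] and [|y|^2 = <y + z, y> = 0]. *)

Section HalfPowers.
Variable R : realType.

Lemma expr_half_lt (e : R) : 0 < e -> exists k, forall n, (k <= n)%N -> 2^-1 ^+ n < e.
Proof.
move=> /(ltr_add_invr (y := 0))[k]; rewrite add0r => hk; exists k => n kn.
apply: le_lt_trans (ler_wiXn2l _ _ kn) _; rewrite ?invr_ge0 ?invf_le1 ?ler1n //.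
apply: le_lt_trans hk; rewrite exprVn lef_pV2 ?posrE ?exprn_gt0 ?ltr0n //.
by rewrite -natrX ler_nat ltn_expl.
Qed.

Lemma half_pow_gt0 n : 0 < 2^-1 ^+ n :> R.
Proof. by rewrite exprn_gt0 // invr_gt0. Qed.

Lemma geometric_tail m n : (m <= n)%N ->
  \sum_(m <= k < n) 2^-1 ^+ k <= 2 * 2^-1 ^+ m :> R.
Proof.
move=> mn; suff -> : \sum_(m <= k < n) 2^-1 ^+ k = 2 * 2^-1 ^+ m - 2 * 2^-1 ^+ n :> R.
  by rewrite lerBlDr lerDl mulr_ge0 // ltW // half_pow_gt0.
rewrite -(subnKC mn); elim: (n - m)%N => [|L IH]; first by rewrite addn0 big_geq // subrr.
rewrite addnS big_nat_recr ?leq_addr //= IH exprS mulrA divff ?pnatr_eq0 //; ring.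
Qed.

Lemma small_scale (N eps : R) : 0 <= N -> 0 < eps -> exists2 c, 0 < c & c ^+ 2 * N <= eps.
Proof.
move=> N_ge0 eps_gt0; pose c := eps / (1 + eps + N).
have c_gt0 : 0 < c by rewrite divr_gt0 //; lra.
have cE : c * (1 + eps + N) = eps by rewrite mulfVK //; lra.
exists c => //; rewrite expr2 -mulrA.
have cN : c * N <= eps by rewrite -cE; apply: ler_wpM2l; lra.
have c_le1 : c <= 1 by rewrite -(ler_pM2r eps_gt0) mul1r -{2}cE; apply: ler_wpM2l; lra.
apply: le_trans (ler_wpM2l (ltW c_gt0) cN) _.
by have := ler_wpM2r (ltW eps_gt0) c_le1; rewrite mul1r.
Qed.

End HalfPowers.

Section SquaredModulus.
Variable R : realType.
Implicit Types (z w : R[i]) (r : R).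
Local Notation Re := (@complex.Re R).
Local Notation Im := (@complex.Im R).

Definition normc2 z : R := Re z ^+ 2 + Im z ^+ 2.

Lemma normc2_ge0 z : 0 <= normc2 z.
Proof. by rewrite /normc2; nra. Qed.

Lemma normc2_eq0 z : normc2 z = 0 -> z = 0.
Proof. by case: z => a b; rewrite /normc2 /= => h; congr (_ +i* _); nra. Qed.

Lemma normc2_small_eq0 z : (forall e, 0 < e -> normc2 z <= e) -> z = 0.
Proof.
move=> small; apply: normc2_eq0; apply/eqP; rewrite eq_le normc2_ge0 andbT.
by apply/ler_addgt0Pr => e /small; rewrite add0r.
Qed.

Lemma mulcJ_normc2 z : z * z^* = (normc2 z)%:C.
Proof. by case: z => a b; rewrite /normc2; simpc; congr (_ +i* _); ring. Qed.

Lemma normc2N z : normc2 (- z) = normc2 z.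
Proof. by case: z => a b; rewrite /normc2 /=; ring. Qed.

Lemma normc2J z : normc2 z^* = normc2 z.
Proof. by case: z => a b; rewrite /normc2 /=; ring. Qed.

Lemma normc2_realM r z : normc2 (r%:C * z) = r ^+ 2 * normc2 z.
Proof. by case: z => a b; rewrite /normc2 /=; ring. Qed.

Lemma normc2_real r : normc2 r%:C = r ^+ 2.
Proof. by rewrite /normc2 /=; ring. Qed.

Lemma normc2D_le z w : normc2 (z + w) <= 2 * normc2 z + 2 * normc2 w.
Proof.
case: z w => a b [c d]; rewrite /normc2 /=.
have := sqr_ge0 (a - c); have := sqr_ge0 (b - d); nra.
Qed.

Lemma ReD z w : Re (z + w) = Re z + Re w. Proof. by case: z w => a b [c d]. Qed.
Lemma ReN z : Re (- z) = - Re z. Proof. by case: z. Qed.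
Lemma ReJ z : Re z^* = Re z. Proof. by case: z. Qed.

Lemma Re_realJM r s : Re (r%:C^* * s%:C) = r * s.
Proof. by rewrite /=; ring. Qed.

Lemma ltr0c r : (0 < r%:C) = (0 < r).
Proof. by rewrite ltcE /= eqxx. Qed.

Lemma gtc0_real z : 0 < z -> z = (Re z)%:C /\ 0 < Re z.
Proof. by move=> z_gt0; rewrite -ltr0c RRe_real ?gtr0_real. Qed.

End SquaredModulus.

Section InnerProduct.
Variables (R : realType) (H : lmodType R[i]) (ip : H -> H -> R[i]).
Hypothesis hip : is_inner_product ip.
Local Notation Re := (@complex.Re R).
Implicit Types (x y z : H) (u : nat -> H).

Lemma ipC x y : ip y x = (ip x y)^*.
Proof. by case: hip. Qed.

Lemma ip_eq0 x : ip x x = 0 -> x = 0.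
Proof. by case: hip => _ _ _; apply. Qed.

Lemma ipDl x y z : ip (x + y) z = ip x z + ip y z.
Proof. by case: hip => lin _ _ _; rewrite -[x in LHS]scale1r lin mul1r. Qed.

Lemma ip0l z : ip 0 z = 0.
Proof. by apply: (@addrI _ (ip 0 z)); rewrite -ipDl !addr0. Qed.

Lemma ipZl a x z : ip (a *: x) z = a * ip x z.
Proof. by case: hip => lin _ _ _; rewrite -[a *: x]addr0 lin ip0l addr0. Qed.

Lemma ipNl x z : ip (- x) z = - ip x z.
Proof. by rewrite -scaleN1r ipZl mulN1r. Qed.

Lemma ipBl x y z : ip (x - y) z = ip x z - ip y z.
Proof. by rewrite ipDl ipNl. Qed.

Lemma ip0r z : ip z 0 = 0.
Proof. by rewrite ipC ip0l rmorph0. Qed.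

Lemma ipDr x y z : ip z (x + y) = ip z x + ip z y.
Proof. by rewrite ipC ipDl rmorphD /= -!ipC. Qed.

Lemma ipZr a x z : ip z (a *: x) = a^* * ip z x.
Proof. by rewrite ipC ipZl rmorphM /= -ipC. Qed.

Lemma ipNr x z : ip z (- x) = - ip z x.
Proof. by rewrite ipC ipNl rmorphN /= -ipC. Qed.

Lemma ipBr x y z : ip z (x - y) = ip z x - ip z y.
Proof. by rewrite ipDr ipNr. Qed.

Lemma ip_suml (I : Type) (r : seq I) (P : pred I) (F : I -> H) z :
  ip (\sum_(i <- r | P i) F i) z = \sum_(i <- r | P i) ip (F i) z.
Proof. exact: (big_morph (ip^~ z) (fun x y => ipDl x y z) (ip0l z)). Qed.

Definition sqnorm x : R := Re (ip x x).

Lemma ipxx x : ip x x = (sqnorm x)%:C.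
Proof. by case: hip => _ _ ge0 _; rewrite RRe_real ?ger0_real. Qed.

Lemma sqnorm_ge0 x : 0 <= sqnorm x.
Proof. by case: hip => _ _ ge0 _; rewrite -ler0c -ipxx. Qed.

Lemma sqnorm_eq0 x : sqnorm x = 0 -> x = 0.
Proof. by move=> x0; apply: ip_eq0; rewrite ipxx x0. Qed.

Lemma sqnorm0 : sqnorm 0 = 0.
Proof. by rewrite /sqnorm ip0l. Qed.

Lemma nrm2_ltc x r : (nrm2 ip x < r%:C) = (sqnorm x < r).
Proof. by rewrite /nrm2 ipxx ltcR. Qed.

Lemma sqnormD x y : sqnorm (x + y) = sqnorm x + sqnorm y + 2 * Re (ip x y).
Proof. by rewrite /sqnorm ipDl !ipDr (ipC x y) !ReD ReJ; ring. Qed.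

Lemma sqnormZ a x : sqnorm (a *: x) = normc2 a * sqnorm x.
Proof. by rewrite /sqnorm ipZl ipZr mulrA mulcJ_normc2 ipxx -rmorphM. Qed.

Lemma sqnormN x : sqnorm (- x) = sqnorm x.
Proof. by rewrite /sqnorm ipNl ipNr opprK. Qed.

Lemma sqnormB x y : sqnorm (x - y) = sqnorm x + sqnorm y - 2 * Re (ip x y).
Proof. by rewrite sqnormD sqnormN ipNr ReN; ring. Qed.

Lemma parallelogram x y :
  sqnorm (x + y) + sqnorm (x - y) = 2 * sqnorm x + 2 * sqnorm y.
Proof. by rewrite sqnormD sqnormB; ring. Qed.

Lemma cauchy_schwarz x y : normc2 (ip x y) <= sqnorm x * sqnorm y.
Proof.
have [->|y_neq0] := eqVneq y 0; first by rewrite ip0r sqnorm0 mulr0 /normc2 /=; lra.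
have ny_gt0 : 0 < sqnorm y.
  by rewrite lt_neqAle sqnorm_ge0 andbT eq_sym; apply: contra_neq y_neq0 => /sqnorm_eq0.
have := sqnorm_ge0 (x - (((sqnorm y)^-1)%:C * ip x y) *: y).
rewrite sqnormB sqnormZ ipZr normc2_realM rmorphM /=.
rewrite -[_ * _^* * _]mulrA (mulrC _ (ip x y)) mulcJ_normc2.
rewrite Re_realJM; set A := normc2 _; set N := sqnorm y.
have -> : N^-1 ^+ 2 * A * N = N^-1 * A by field; rewrite gt_eqF.
by rewrite -ler_pdivrMr // mulrC; lra.
Qed.

Lemma cauchy_seqR u :
  (forall e : R, 0 < e -> exists M, forall m n, (M <= m)%N -> (M <= n)%N ->
     sqnorm (u m - u n) < e) ->
  cauchy_seq ip u.
Proof.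
move=> cu e /gtc0_real[-> /cu[M uM]].
by exists M => m n Mm Mn; rewrite nrm2_ltc; apply: uM.
Qed.

Lemma converges_toR u l : converges_to ip u l ->
  forall e : R, 0 < e -> exists M, forall n, (M <= n)%N -> sqnorm (u n - l) < e.
Proof.
move=> ul e; rewrite -ltr0c => /ul[M uM].
by exists M => n Mn; rewrite -nrm2_ltc; apply: uM.
Qed.

Lemma ip_cvgr u l y : converges_to ip u l ->
  forall e : R, 0 < e -> exists M, forall n, (M <= n)%N ->
    normc2 (ip y (u n) - ip y l) < e.
Proof.
move=> ul e e_gt0; have ny_ge0 := sqnorm_ge0 y.
have [|M uM] := converges_toR ul (e := e / (sqnorm y + 1)).
  by rewrite divr_gt0 //; lra.
exists M => n /uM; rewrite -ipBr ltr_pdivlMr; last lra.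
move=> small; apply: le_lt_trans (cauchy_schwarz y (u n - l)) _.
by have := sqnorm_ge0 (u n - l); nra.
Qed.

Lemma ip_lim_unique u l y c : converges_to ip u l ->
  (forall e : R, 0 < e -> exists M, forall n, (M <= n)%N ->
     normc2 (ip y (u n) - c) < e) ->
  ip y l = c.
Proof.
move=> ul uc; apply/eqP; rewrite -subr_eq0; apply/eqP.
apply: normc2_small_eq0 => e e_gt0.
have [|M1 M1c] := uc (e / 4); first by rewrite divr_gt0.
have [|M2 M2l] := ip_cvgr y ul (e := e / 4); first by rewrite divr_gt0.
pose n := maxn M1 M2.
have -> : ip y l - c = (ip y (u n) - c) - (ip y (u n) - ip y l) by ring.
apply: le_trans (normc2D_le _ _) _; rewrite normc2N.
have := M1c n (leq_maxl _ _); have := M2l n (leq_maxr _ _); lra.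
Qed.

Lemma ip_lim_eventually u l y c M : converges_to ip u l ->
  (forall n, (M <= n)%N -> ip y (u n) = c) -> ip y l = c.
Proof.
move=> ul uc; apply: ip_lim_unique ul _ => e e_gt0.
by exists M => n /uc ->; rewrite subrr /normc2 /=; lra.
Qed.

Lemma perp_closed_subspace (S : H -> Prop) : closed_subspace ip (perp ip S).
Proof.
split; first split.
- by move=> x _; rewrite ip0r.
- by move=> x y Sx Sy s Ss; rewrite ipDr Sx // Sy // addr0.
- by move=> a x Sx s Ss; rewrite ipZr Sx // mulr0.
by move=> u l Su ul s Ss; apply: (ip_lim_eventually (M := 0) ul) => n _; apply: Su.
Qed.

End InnerProduct.

Section Subspace.
Variables (R : realType) (H : lmodType R[i]) (X : H -> Prop).
Hypothesis hX : is_subspace X.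

Lemma subspace0 : X 0.
Proof. by case: hX. Qed.

Lemma subspaceD x y : X x -> X y -> X (x + y).
Proof. by case: hX => _ XD _; apply: XD. Qed.

Lemma subspaceZ a x : X x -> X (a *: x).
Proof. by case: hX => _ _; apply. Qed.

Lemma subspaceB x y : X x -> X y -> X (x - y).
Proof. by move=> Xx Xy; rewrite -scaleN1r; apply/subspaceD/subspaceZ. Qed.

Lemma subspace_sum (I : Type) (r : seq I) (P : pred I) (F : I -> H) :
  (forall i, X (F i)) -> X (\sum_(i <- r | P i) F i).
Proof. by move=> XF; apply: (big_ind X subspace0 subspaceD). Qed.

End Subspace.

Section Projection.
Local Open Scope classical_set_scope.
Variables (R : realType) (H : lmodType R[i]) (ip : H -> H -> R[i]).
Hypothesis hip : is_inner_product ip.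
Variable X : H -> Prop.
Hypothesis hXs : is_subspace X.

(* Test the near-minimality of [x] against [x + l <h - x, u> u], [l = 1 / (|u|^2 + 1)]. *)
Lemma almost_nearest_ip h x delta : X x ->
  (forall y, X y -> sqnorm ip (h - x) <= sqnorm ip (h - y) + delta) ->
  forall u, X u -> normc2 (ip (h - x) u) <= (sqnorm ip u + 1) * delta.
Proof.
move=> Xx x_near u Xu.
set b := ip (h - x) u; set A := normc2 b; set N := sqnorm ip u.
have N_ge0 : 0 <= N := sqnorm_ge0 hip u.
have A_ge0 : 0 <= A := normc2_ge0 b.
pose l := (N + 1)^-1.
have l_gt0 : 0 < l by rewrite invr_gt0; lra.
have lN : l * (N + 1) = 1 by rewrite mulVf //; lra.
have := x_near _ (subspaceD hXs Xx (subspaceZ hXs (l%:C * b) Xu)).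
rewrite opprD addrA [sqnorm ip (h - x - _)]sqnormB // sqnormZ // ipZr // normc2_realM rmorphM /=.
rewrite -[_ * _^* * _]mulrA (mulrC _ b) mulcJ_normc2 Re_realJM -/A -/N => near.
have -> : A = (N + 1) * (l * A) by rewrite mulrA (mulrC _ l) lN mul1r.
apply: ler_wpM2l; first lra.
have lAN : l ^+ 2 * A * N = l * A * (1 - l) by rewrite -lN; ring.
by rewrite lAN in near; have := mulr_ge0 (ltW l_gt0) (mulr_ge0 (ltW l_gt0) A_ge0); nra.
Qed.

Lemma nearest_close h d x y ex ey :
  (forall z, X z -> d <= sqnorm ip (h - z)) -> X x -> X y ->
  sqnorm ip (h - x) <= d + ex -> sqnorm ip (h - y) <= d + ey ->
  sqnorm ip (x - y) <= 2 * ex + 2 * ey.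
Proof.
move=> d_low Xx Xy hx hy.
have Xm := subspaceZ hXs 2^-1 (subspaceD hXs Xx Xy).
have mid : (h - y) + (h - x) = 2 *: (h - 2^-1 *: (x + y)).
  rewrite scalerBr scalerA mulfV ?scale1r; last by rewrite pnatr_eq0.
  by rewrite scaler_nat mulr2n opprD addrACA [- y + _]addrC.
have := parallelogram hip (h - y) (h - x).
have -> : h - y - (h - x) = x - y by rewrite opprB addrC addrA subrK.
rewrite mid sqnormZ //.
have -> : normc2 (2 : R[i]) = 4 by rewrite /normc2 /=; lra.
by have := d_low _ Xm; lra.
Qed.

Hypothesis hc : complete_ip ip.
Hypothesis hXc : is_closed ip X.

Lemma orthogonal_projection h : exists p, X p /\ perp ip X (h - p).
Proof.
pose E : set R := [set sqnorm ip (h - x) | x in (X : set H)].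
have E_inf : has_inf E.
  split; first by exists (sqnorm ip (h - 0)), 0 => //; apply: subspace0.
  by exists 0 => _ [x _ <-]; apply: sqnorm_ge0.
pose d := inf E.
have d_low z : X z -> d <= sqnorm ip (h - z) by move=> Xz; apply: ge_inf E_inf.2 _ _; exists z.
have near k : exists x, X x /\ sqnorm ip (h - x) <= d + 2^-1 ^+ k.
  have [_ [x Xx <-] lt] := inf_adherent (half_pow_gt0 R k) E_inf.
  by exists x; split; last exact: ltW.
have [f hf] := choice near.
have f_cauchy : cauchy_seq ip f.
  apply: cauchy_seqR => // e e_gt0.
  have [|k k_small] := expr_half_lt (e := e / 4); first by rewrite divr_gt0.
  exists k => m n km kn; have [Xm hm] := hf m; have [Xn hn] := hf n.
  have := nearest_close d_low Xm Xn hm hn.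
  by have := k_small m km; have := k_small n kn; lra.
have [p fp] := hc f_cauchy.
exists p; split; first exact: hXc (fun k => (hf k).1) fp.
move=> u Xu; apply/eqP; rewrite ipBr // subr_eq0 eq_sym; apply/eqP.
apply: (ip_lim_unique hip fp) => e e_gt0.
have Nu_ge0 := sqnorm_ge0 hip u.
have [|k k_small] := expr_half_lt (e := e / (sqnorm ip u + 1)).
  by rewrite divr_gt0 //; lra.
exists k => n kn.
rewrite -normc2N opprB -ipBr // ipC // normc2J.
have [Xn hn] := hf n.
apply: le_lt_trans (almost_nearest_ip (h := h) (delta := 2^-1 ^+ n) Xn _ Xu) _.
  by move=> y Xy; have := d_low y Xy; lra.
by rewrite mulrC -ltr_pdivlMr; [apply: k_small | lra].
Qed.

End Projection.

Lemma lin_dep_of_span (K : fieldType) (V : lmodType K) m n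
    (w : 'I_m -> V) (g : 'I_n -> V) (A : 'M[K]_(m, n)) :
  (n < m)%N -> (forall i, w i = \sum_j A i j *: g j) ->
  exists2 c : 'I_m -> K, exists i, c i != 0 & \sum_i c i *: w i = 0.
Proof.
move=> lt_nm wA.
have : kermx A != 0.
  by rewrite kermx_eq0 /row_free; apply: contraTneq (rank_leq_col A) => ->; rewrite -ltnNge.
case/rowV0Pn => v /sub_kermxP vA v_neq0.
exists (fun i => v 0 i).
  apply/existsP; move: v_neq0; apply: contraNT => /existsPn v0.
  by apply/eqP/rowP => i; rewrite mxE; apply/eqP/negPn/v0.
rewrite (eq_bigr (fun i => \sum_j (v 0 i * A i j) *: g j)); last first.
  by move=> i _; rewrite wA scaler_sumr; apply: eq_bigr => j _; rewrite scalerA.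
rewrite exchange_big big1 // => j _; rewrite -scaler_suml.
by move/matrixP/(_ 0 j): vA; rewrite !mxE => ->; rewrite scale0r.
Qed.

Lemma dependent_choice_mkseq (T : Type) (good : seq T -> Prop) :
  good [::] -> (forall s, good s -> exists x, good (rcons s x)) ->
  exists g : nat -> T, forall n, good (mkseq g n).
Proof.
move=> good0 step; have [x0 _] := step _ good0.
have next_ex s : exists x, good s -> good (rcons s x).
  case: (pselect (good s)) => [/step[x sx] | ngood]; first by exists x.
  by exists x0 => /ngood.
have [next next_good] := choice next_ex.
pose G n := iter n (fun s => rcons s (next s)) [::].
have GE n : G n = mkseq (fun k => next (G k)) n.
  by elim: n => // n IH; rewrite mkseqS -IH.
exists (fun k => next (G k)) => n; rewrite -GE.
by elim: n => //= n IH; apply: next_good.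
Qed.

Section Orthonormal.
Variables (R : realType) (H : lmodType R[i]) (ip : H -> H -> R[i]).

Definition orthonormal_upto n (g : nat -> H) : Prop :=
  forall i j, (i < n)%N -> (j < n)%N -> ip (g i) (g j) = (i == j)%:R.

Definition orthonormal_sequence (g : nat -> H) : Prop :=
  forall i j, ip (g i) (g j) = (i == j)%:R.

Hypothesis hip : is_inner_product ip.

Lemma unit_multiple x : x != 0 -> exists a, ip (a *: x) (a *: x) = 1.
Proof.
move=> x_neq0; have Nx_gt0 : 0 < sqnorm ip x.
  by rewrite lt_neqAle sqnorm_ge0 // andbT eq_sym; apply: contra_neq x_neq0 => /sqnorm_eq0->.
exists ((Num.sqrt (sqnorm ip x))^-1)%:C.
rewrite ipxx // sqnormZ // normc2_real exprVn sqr_sqrtr ?ltW //.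
by rewrite mulVf ?gt_eqF.
Qed.

Variable X : H -> Prop.
Hypothesis hXs : is_subspace X.
Hypothesis hXdim : infinite_dim X.

Lemma orthonormal_extend n (g : nat -> H) :
  (forall i, (i < n)%N -> X (g i)) -> orthonormal_upto n g ->
  exists v, [/\ X v, ip v v = 1 & forall i, (i < n)%N -> ip v (g i) = 0].
Proof.
move=> Xg og; have [w [Xw w_indep]] := hXdim n.+1.
pose r i := w i - \sum_(j < n) ip (w i) (g j) *: g j.
have r_perp i k : (k < n)%N -> ip (r i) (g k) = 0.
  move=> lt_kn; rewrite ipBl // ip_suml // (bigD1 (Ordinal lt_kn)) //= big1 => [|j ne_jk].
    by rewrite ipZl // og // eqxx mulr1 addr0 subrr.
  have /negbTE jk : (j : nat) != k by apply: contra_neq ne_jk => jk; apply: val_inj.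
  by rewrite ipZl // og // jk mulr0.
have [[i ri_neq0] | r0] := pselect (exists i, r i != 0).
  have [a ar1] := unit_multiple ri_neq0; exists (a *: r i); split => //.
    apply/(subspaceZ hXs)/(subspaceB hXs (Xw i))/(subspace_sum hXs) => j.
    exact/(subspaceZ hXs)/Xg.
  by move=> k lt_kn; rewrite ipZl // r_perp // mulr0.
pose A : 'M_(n.+1, n) := \matrix_(i, j) ip (w i) (g j).
have [|c [i ci]] := lin_dep_of_span (w := w) (g := fun j : 'I_n => g j) (A := A) (ltnSn n).
  move=> i; rewrite (eq_bigr (fun j : 'I_n => ip (w i) (g j) *: g j)) => [|j _].
    by apply/eqP; rewrite -subr_eq0; apply/negPn/negP => ri; apply: r0; exists i.
  by rewrite mxE.
by move=> /w_indep/(_ i)/eqP; rewrite (negbTE ci).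
Qed.

Lemma exists_orthonormal_sequence : exists2 g, (forall i, X (g i)) & orthonormal_sequence g.
Proof.
pose good s := (forall i, (i < size s)%N -> X s`_i) /\ orthonormal_upto (size s) (nth 0 s).
have [||g gn] := @dependent_choice_mkseq _ good; first by split.
- move=> s [Xs os]; have [v [Xv vv vs]] := orthonormal_extend Xs os.
  exists v; rewrite /good size_rcons; split => [i | i j]; rewrite !ltnS.
    rewrite leq_eqVlt => /predU1P[->|lti]; rewrite nth_rcons; first by rewrite ltnn eqxx.
    by rewrite lti; apply: Xs.
  rewrite (leq_eqVlt i) (leq_eqVlt j) => /predU1P[->|lti] /predU1P[->|ltj]; rewrite !nth_rcons.
  + by rewrite ltnn !eqxx.
  + by rewrite ltnn eqxx ltj vs // gtn_eqF.
  + by rewrite lti ltnn eqxx ipC // vs // rmorph0 ltn_eqF.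
  + by rewrite lti ltj os.
- exists g => [i | i j].
    by have [Xg _] := gn i.+1; move: (Xg i); rewrite size_mkseq nth_mkseq //; apply.
  have [_ og] := gn (maxn i j).+1; move: (og i j).
  by rewrite size_mkseq !nth_mkseq ?ltnS ?leq_maxl ?leq_maxr //; apply.
Qed.

End Orthonormal.

Section Biorthogonal.
Variables (R : realType) (H : lmodType R[i]) (ip : H -> H -> R[i]).
Hypothesis hip : is_inner_product ip.

Lemma ip_sum_biorth n (u t : nat -> H) (c : 'I_n -> R[i]) (j : 'I_n) :
  (forall i k, ip (u i) (t k) = (i == k)%:R) ->
  ip (\sum_(i < n) c i *: u i) (t j) = c j.
Proof.
move=> ut; rewrite ip_suml // (bigD1 j) //= big1 => [|i ij].
  by rewrite ipZl // ut eqxx mulr1 addr0.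
by rewrite ipZl // ut (inj_eq val_inj) (negbTE ij) mulr0.
Qed.

Lemma infinite_dim_orthonormal (S : H -> Prop) (u : nat -> H) :
  orthonormal_sequence ip u -> (forall i, S (u i)) -> infinite_dim S.
Proof.
move=> ou Su n; exists (fun i : 'I_n => u i); split => // c c0 j.
by have := ip_sum_biorth c j ou; rewrite c0 ip0l.
Qed.

Lemma infinite_codim_perp_range (s t : nat -> H) :
  (forall i k, ip (s i) (t k) = (i == k)%:R) ->
  infinite_codim (perp ip (fun x => exists n, x = s n)).
Proof.
move=> st n; exists (fun i : 'I_n => s i) => c sum_perp j.
set y := \sum_(i < n) c i *: s i in sum_perp.
have y0 : y = 0.
  apply: (ip_eq0 hip); rewrite {1}/y ip_suml // big1 // => i _.
  by rewrite ipZl // sum_perp ?mulr0 //; exists i.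
by have := ip_sum_biorth c j st; rewrite -/y y0 ip0l.
Qed.

Lemma dense_perp_eq0 (d : nat -> H) y :
  (forall x (e : R[i]), 0 < e -> exists n, nrm2 ip (x - d n) < e) ->
  (forall n, ip (d n) y = 0) -> y = 0.
Proof.
move=> hd dy; apply: (sqnorm_eq0 hip); apply/eqP; rewrite eq_le sqnorm_ge0 // andbT.
apply/ler_addgt0Pr => e e_gt0; rewrite add0r.
have [|n] := hd y e%:C; first by rewrite ltr0c.
rewrite nrm2_ltc // sqnormB // ipC // dy rmorph0 /=.
by have := sqnorm_ge0 hip (d n); lra.
Qed.

End Biorthogonal.

Section OrthonormalSeries.
Variables (R : realType) (H : lmodType R[i]) (ip : H -> H -> R[i]).
Hypotheses (hip : is_inner_product ip) (hc : complete_ip ip).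

Lemma cauchy_geometric (z : nat -> H) (C : R) :
  (forall m n, (m <= n)%N -> sqnorm ip (z n - z m) <= C * 2^-1 ^+ m) -> cauchy_seq ip z.
Proof.
move=> zC; apply: cauchy_seqR => // e e_gt0.
have C1_gt0 : 0 < `|C| + 1 by have := normr_ge0 C; lra.
have [|M M_small] := expr_half_lt (e := e / (`|C| + 1)); first by rewrite divr_gt0.
have key m n : (M <= m)%N -> (m <= n)%N -> sqnorm ip (z n - z m) < e.
  move=> Mm mn; apply: le_lt_trans (zC _ _ mn) _.
  have := M_small m Mm; rewrite ltr_pdivlMr // => small.
  apply: le_lt_trans small; rewrite mulrC; apply: ler_wpM2l; first exact/ltW/half_pow_gt0.
  by rewrite (le_trans (ler_norm C)) // lerDl.
exists M => m n Mm Mn; have [mn|nm] := leqP m n; first by rewrite -sqnormN // opprB key.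
by rewrite key // ltnW.
Qed.

Variable X : H -> Prop.
Hypothesis hX : closed_subspace ip X.
Variable e : nat -> H.
Hypotheses (he : orthonormal_sequence ip e) (heX : forall n, X (e n)).

Lemma sqnorm_orthonormal_sum (a : nat -> R[i]) m n :
  sqnorm ip (\sum_(m <= k < n) a k *: e k) = \sum_(m <= k < n) normc2 (a k).
Proof.
elim: n => [|n IH]; first by rewrite !big_geq // sqnorm0.
have [mn|nm] := leqP m n; last by rewrite !big_geq ?sqnorm0.
rewrite !big_nat_recr //= sqnormD // IH sqnormZ //.
have -> : sqnorm ip (e n) = 1 by rewrite /sqnorm he eqxx.
have -> : ip (\sum_(m <= k < n) a k *: e k) (a n *: e n) = 0.
  rewrite ip_suml // big_nat_cond big1 // => k /andP[/andP[_ kn] _].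
  by rewrite ipZl // ipZr // he ltn_eqF // !mulr0.
by rewrite mulr1 /= mulr0 addr0.
Qed.

Lemma orthonormal_series (b : nat -> R[i]) (K : R) :
  (forall n, normc2 (b n) <= K * 2^-1 ^+ n) ->
  exists2 z, X z & forall n, ip (e n) z = b n.
Proof.
move=> bK; have K_ge0 : 0 <= K.
  by have := bK 0%N; rewrite expr0 mulr1; apply: le_trans (normc2_ge0 _).
pose z M := \sum_(k < M) (b k)^* *: e k.
have tail m n : (m <= n)%N -> sqnorm ip (z n - z m) <= (2 * K) * 2^-1 ^+ m.
  move=> mn; have -> : z n - z m = \sum_(m <= k < n) (b k)^* *: e k.
    rewrite /z -!(big_mkord xpredT (fun k => (b k)^* *: e k)).
    by rewrite (big_cat_nat (leq0n m) mn) /= addrAC subrr add0r.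
  rewrite sqnorm_orthonormal_sum -mulrA -[_ * (_ * _)]mulrCA.
  rewrite (le_trans _ (ler_wpM2l K_ge0 (geometric_tail R mn))) // mulr_sumr.
  by apply: ler_sum => k _; rewrite normc2J.
have [l zl] := hc (cauchy_geometric tail).
exists l; first by apply: hX.2 zl => M; apply: (subspace_sum hX.1) => k; apply: (subspaceZ hX.1).
move=> n; apply: (ip_lim_eventually hip (M := n.+1) zl) => M nM.
rewrite ipC // (ip_sum_biorth hip (fun k : 'I_M => (b k)^*) (Ordinal nM) he).
exact: conjcK.
Qed.

End OrthonormalSeries.

Lemma small_perp_decomposition (R : realType) (H : lmodType R[i]) (ip : H -> H -> R[i])
    (X : H -> Prop) :
  is_inner_product ip -> complete_ip ip -> closed_subspace ip X ->
  forall h (eps : R), 0 < eps ->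
  exists f, [/\ perp ip X f, sqnorm ip f <= eps & exists p a, X p /\ h = p + a *: f].
Proof.
move=> hip hc hX h eps eps_gt0.
have [p [Xp hp]] := orthogonal_projection hip hX.1 hc hX.2 h.
have [c c_gt0 small] := small_scale (sqnorm_ge0 hip (h - p)) eps_gt0.
exists (c%:C *: (h - p)); split.
- by move=> x Xx; rewrite ipZr // hp // mulr0.
- by rewrite sqnormZ // normc2_real.
- exists p, (c^-1)%:C; split => //.
  by rewrite scalerA -rmorphM /= mulVf ?gt_eqF // scale1r addrC subrK.
Qed.

Section Transversal.
Variables (R : realType) (H : lmodType R[i]) (ip : H -> H -> R[i]).
Hypotheses (hip : is_inner_product ip) (hc : complete_ip ip).
Variable X : H -> Prop.
Hypothesis hX : closed_subspace ip X.
Variables d g f : nat -> H.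
Hypothesis hd : forall x (e : R[i]), 0 < e -> exists n, nrm2 ip (x - d n) < e.
Hypothesis hg : orthonormal_sequence ip g.
Hypothesis hgX : forall n, X (g n).
Hypothesis hf : forall n, [/\ perp ip X (f n), sqnorm ip (f n) <= 2^-1 ^+ n &
  exists p a, X p /\ d n = p + a *: f n].

Let S x := exists n, x = g n.*2 + f n.

Lemma orthonormal_subsequence (h : nat -> nat) :
  injective h -> orthonormal_sequence ip (fun n => g (h n)).
Proof. by move=> h_inj i j; rewrite hg (inj_eq h_inj). Qed.

Lemma ip_f_X n x : X x -> ip (f n) x = 0.
Proof. by case: (hf n) => fX _ _ Xx; rewrite ipC // fX // rmorph0. Qed.

Lemma transversal_infinite_dim : infinite_dim (perp ip S).
Proof.
apply: (infinite_dim_orthonormal hip (orthonormal_subsequence (h := fun n => n.*2.+1) _)).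
  by move=> i j /eq_add_S /double_inj.
move=> i x [n ->]; rewrite ipDl // hg ip_f_X // addr0.
by have /negbTE-> : n.*2 != i.*2.+1 by apply/eqP => /(congr1 odd); rewrite oddS !odd_double.
Qed.

Lemma transversal_infinite_codim : infinite_codim (perp ip S).
Proof.
apply: (infinite_codim_perp_range hip (t := fun n => g n.*2)) => i k.
by rewrite ipDl // (orthonormal_subsequence double_inj) ip_f_X // addr0.
Qed.

Lemma transversal_perpX y : perp ip S y -> perp ip X y -> y = 0.
Proof.
move=> Sy Xy; apply: (dense_perp_eq0 hip hd) => n.
have [_ _ [p [a [Xp ->]]]] := hf n.
have fy : ip (f n) y = 0.
  by have := Sy _ (ex_intro _ n erefl); rewrite ipDl // Xy // add0r.
by rewrite ipDl // ipZl // Xy // fy mulr0 addr0.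
Qed.

Lemma transversal_perp_perpX y : perp ip (perp ip S) y -> perp ip X y -> y = 0.
Proof.
move=> SSy Xy.
have [|z Xz gz] := orthonormal_series hip hc hX (orthonormal_subsequence double_inj)
    (fun n => hgX n.*2) (b := fun n => - ip (f n) y) (K := sqnorm ip y).
  move=> n; rewrite normc2N mulrC; apply: le_trans (cauchy_schwarz hip _ _) _.
  by case: (hf n) => _ fn _; apply: ler_wpM2r fn; apply: sqnorm_ge0.
have Syz : perp ip S (y + z).
  move=> x [n ->]; rewrite (ipDr hip) !(ipDl hip) gz (ip_f_X n Xz) (Xy _ (hgX _)).
  by rewrite add0r addr0 subrr.
by apply: (ip_eq0 hip); have := SSy _ Syz; rewrite (ipDl hip) (Xy _ Xz) addr0.
Qed.

End Transversal.

Theorem lemma4 (R : realType) (H : lmodType R[i]) (ip : H -> H -> R[i])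
  (hH : is_hilbert_space ip)
  (hinf : infinite_dim (fun _ : H => True))
  (X : H -> Prop) (hX : closed_subspace ip X)
  (hXdim : infinite_dim X) (hXcodim : infinite_codim X) :
  exists Q : H -> Prop,
    [/\ closed_subspace ip Q, infinite_dim Q, infinite_codim Q,
        (forall y : H, Q y -> perp ip X y -> y = 0) &
        (forall y : H, perp ip Q y -> perp ip X y -> y = 0)].
Proof.
(* [hinf] follows from [hXdim], and the construction does not need [hXcodim]. *)
case: hH => hip hc [d hd].
have [g hgX hg] := exists_orthonormal_sequence hip hX.1 hXdim.
have [f hf] := choice (fun n => small_perp_decomposition hip hc hX (d n) (half_pow_gt0 R n)).
exists (perp ip (fun x => exists n, x = g n.*2 + f n)); split.
- exact: perp_closed_subspace.
- exact: (transversal_infinite_dim hip hg hgX hf).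
- exact: (transversal_infinite_codim hip hg hgX hf).
- exact: (transversal_perpX hip hd hgX hf).
- exact: (transversal_perp_perpX hip hc hX hg hgX hf).
Qed.
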